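(* Let $X$ be a finite set, $C_X$ a facegram over $X$ with filtration $F_X=\Psi(C_X)$, and let $S$ be any collection of nonempty subsets of $X$ with $\mathbf{s}(C_X)\subset S\subset\mathbf{pow}(X)$. Then $$\mathbf{mgm}(C_X)=\Big\{\Big\{\Big[F_X(\sigma),\min_{\sigma\subsetneq\tau\in S}F_X(\tau)\Big)\ \Big|\ \sigma\in S\Big\}\Big\},$$ where empty intervals are discarded and a minimum over the empty set is $+\infty$.
   Context: $\mathbf{pow}(X)$ is the set of nonempty subsets of $X$. A facegram over $X$ is a monotone map $C_X$ from $\mathbb{R}$ to face-sets of $X$ (families of pairwise inclusion-incomparable nonempty subsets, ordered by: each face of one lies in a face of the other) which equals $\{X\}$ for large $t$ and, for some reals $a_1<\dots<a_n$, is $\emptyset$ on $(-\infty,a_1)$ and constant on each $[a_i,a_{i+1})$ ($a_{n+1}:=\infty$). $\Psi(C_X)(S):=\min\{t\mid S\text{ is contained in some face of }C_X(t)\}$. $\mathbf{s}(C_X):=\{\sigma\mid\sigma\in C_X(t)\text{ for some }t\}$. For nonempty $\sigma$, $I_\sigma:=\{t\mid\sigma\in C_X(t)\}$, and $\mathbf{mgm}(C_X)$ is the multiset of nonempty $I_\sigma$ over all nonempty $\sigma\subset X$. *)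

From HB Require Import structures.
From mathcomp Require Import all_boot all_order all_algebra.
From mathcomp Require Import boolp classical_sets reals.
Set Implicit Arguments. Unset Strict Implicit. Unset Printing Implicit Defensive.
Import Order.TTheory GRing.Theory Num.Theory.
Local Open Scope ring_scope.
Local Open Scope classical_set_scope.

Notation fset0 := (@finset.set0 _).

Section Facegrams.
Variables (R : realType) (X : finType).

Definition is_faceset (A : {set {set X}}) : Prop :=
  fset0 \notin A /\
  (forall f g, f \in A -> g \in A -> f \subset g -> f = g).

Definition face_le (A B : {set {set X}}) : Prop :=
  forall f, f \in A -> exists2 g, g \in B & f \subset g.

Definition facegram (C : R -> {set {set X}}) : Prop :=
  [/\ (forall t, is_faceset (C t)),
      (forall s t, s <= t -> face_le (C s) (C t)),
      (exists T : R, forall t, T <= t -> C t = [set [set: X]]%SET) &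
      (exists a : seq R,
         [/\ a != [::], sorted <%R a,
             (forall t, t < head 0 a -> C t = fset0) &
             (forall (i : nat) (t t' : R), (i < size a)%N ->
                 a`_i <= t -> a`_i <= t' ->
                 ((i.+1 < size a)%N -> t < a`_i.+1 /\ t' < a`_i.+1) ->
                 C t = C t')])].

Definition Psi (C : R -> {set {set X}}) (S : {set X}) : R :=
  inf [set t : R | exists2 f, f \in C t & S \subset f].

Definition faces_of (C : R -> {set {set X}}) (sigma : {set X}) : Prop :=
  exists t : R, sigma \in C t.

Definition life (C : R -> {set {set X}}) (sigma : {set X}) : set R :=
  [set t | sigma \in C t].

Definition bar_interval (F : {set X} -> R) (S : {set {set X}})
    (sigma : {set X}) : set R :=
  [set t | F sigma <= t /\
           forall tau, tau \in S -> sigma \proper tau -> t < F tau].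

End Facegrams.

From HB Require Import structures.
From mathcomp Require Import all_boot all_order all_algebra.
From mathcomp Require Import boolp classical_sets reals.
Import Order.TTheory GRing.Theory Num.Theory.
Local Open Scope ring_scope.

(* Call [s] covered at time [t] when [s] lies in some face
   of [C t], so that [Psi C s] is the infimum of the covering times of [s].
   Covering is upward closed in time (monotonicity of [C]), and since [C] is
   right-continuous (piecewise constant on half-open steps) the infimum is
   attained: [s] is covered at [t] iff [Psi C s <= t].  From this we read off
   that [s] is a face of [C t] exactly when [t] lies in the bar interval
   [[Psi C s, min_{s ⊊ tau ∈ S} Psi C tau)]: a face is covered, no strict
   superset of it can be covered (faces are incomparable), and conversely a
   covering face of [s] lies in [S] and, if it were strictly larger than [s],
   would be covered at time [t].  Hence [life C s] equals the bar interval of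
   [s] for every [s ∈ S], while sets outside [S] are never faces.  The two
   multisets of the theorem are therefore indexed by the same sets [s] with
   the same intervals, which gives the equality of all multiplicities. *)

Lemma sorted_step {R : realDomainType} (a : seq R) (t : R) :
  a != [::] -> sorted <%R a -> head 0 a <= t ->
  exists i, [/\ (i < size a)%N, a`_i <= t & ((i.+1 < size a)%N -> t < a`_i.+1)].
Proof.
elim: a => [//|x l IH] _ /= sorted_xl x_le_t.
case: l IH sorted_xl => [|y l] IH sorted_xl; first by exists 0%N.
have [t_lt_y | y_le_t] := ltP t y; first by exists 0%N.
have [i [i_lt ai_le ai1_gt]] := IH isT (path_sorted sorted_xl) y_le_t.
by exists i.+1.
Qed.

Section Facegram.
Variables (R : realType) (X : finType) (C : R -> {set {set X}}).
Hypothesis facegramC : facegram C.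

Definition covering_times (s : {set X}) : set R :=
  [set t | exists2 f, f \in C t & s \subset f].

(* Every set is covered by the final face [X], and nothing is covered before
   the first step, so [Psi C s] is a genuine infimum. *)
Lemma covering_times_has_inf (s : {set X}) : has_inf (covering_times s).
Proof.
case: facegramC => _ _ [T CT] [a [_ _ C_before _]]; split.
  exists T; exists [set: X]%SET; last exact: finset.subsetT.
  by rewrite CT // finset.in_set1.
exists (head 0 a) => t [f ft _]; rewrite leNgt; apply/negP => t_lt.
by rewrite C_before // inE in ft.
Qed.

Lemma Psi_le_covering (s : {set X}) (t : R) :
  covering_times s t -> Psi C s <= t.
Proof. by move=> cov; apply: ge_inf => //; case: (covering_times_has_inf s). Qed.

Lemma facegram_right_constant (t : R) :
  exists2 d : R, 0 < d & forall u, t <= u -> u < t + d -> C u = C t.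
Proof.
case: facegramC => _ _ _ [a [a_ne sorted_a C_before C_step]].
have [t_lt | head_le] := ltP t (head 0 a).
  exists (head 0 a - t); first by rewrite subr_gt0.
  by move=> u _; rewrite addrC subrK => u_lt; rewrite !C_before.
have [i [i_lt ai_le ai1_gt]] := sorted_step a t a_ne sorted_a head_le.
have step u : t <= u -> ((i.+1 < size a)%N -> u < a`_i.+1) -> C u = C t.
  move=> t_le_u u_lt; apply: (C_step i) => //; first exact: le_trans t_le_u.
  by move=> /[dup] /u_lt ? /ai1_gt.
case: (ltnP i.+1 (size a)) => [last_step | i_last].
  exists (a`_i.+1 - t); first by rewrite subr_gt0 ai1_gt.
  by move=> u t_le_u; rewrite addrC subrK => u_lt; apply: step.
exists 1 => [|u t_le_u _]; first exact: ltr01.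
by apply: step => // i_lt'; move: i_last; rewrite leqNgt i_lt'.
Qed.

(* The infimum defining [Psi] is attained, and covering persists in time. *)
Lemma covering_from_Psi (s : {set X}) (t : R) :
  Psi C s <= t -> covering_times s t.
Proof.
case: facegramC => _ C_mono _ _.
rewrite le_eqVlt => /orP[/eqP <- | Psi_lt].
  have [d d_gt0 C_const] := facegram_right_constant (Psi C s).
  have [u [f fu sf] u_lt] := inf_adherent d_gt0 (covering_times_has_inf s).
  have Psi_le_u : Psi C s <= u by apply: Psi_le_covering; exists f.
  by exists f => //; rewrite -(C_const u Psi_le_u u_lt).
have [|u [f fu sf] u_lt] :=
  inf_adherent (eps := t - Psi C s) _ (covering_times_has_inf s).
  by rewrite subr_gt0.
rewrite addrC subrK in u_lt.
have [g gt fg] := C_mono u t (ltW u_lt) f fu.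
by exists g => //; apply: fintype.subset_trans fg.
Qed.

Lemma covering_timesE (s : {set X}) (t : R) :
  covering_times s t <-> Psi C s <= t.
Proof. by split; [apply: Psi_le_covering | apply: covering_from_Psi]. Qed.

Section Support.
Variable S : {set {set X}}.
Hypothesis faces_in_S : forall sigma, faces_of C sigma -> sigma \in S.

Lemma life_bar_interval (s : {set X}) : life C s = bar_interval (Psi C) S s.
Proof.
case: facegramC => is_faceset_C _ _ _.
apply/seteqP; split => t /=.
  move=> s_face; split; first by apply/covering_timesE; exists s.
  move=> tau tau_S s_tau; rewrite ltNge; apply/negP.
  move=> /covering_timesE [g gt tau_g].
  have s_g : s \subset g by apply: fintype.subset_trans tau_g; exact: proper_sub.
  have s_eq_g := (is_faceset_C t).2 _ _ s_face gt s_g; subst g.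
  by move: (proper_sub_trans s_tau tau_g); rewrite fintype.properxx.
case=> Psi_le tau_later; have [g gt s_g] := covering_from_Psi s t Psi_le.
have g_S : g \in S by apply: faces_in_S; exists t.
case: (eqVneq s g) => [-> // | s_ne_g].
have s_proper_g : s \proper g by rewrite finset.properEneq s_ne_g s_g.
have := tau_later g g_S s_proper_g; rewrite ltNge => /negP; case.
by apply/covering_timesE; exists g.
Qed.

Lemma life_outside_S (s : {set X}) : s \notin S -> life C s = set0.
Proof.
move=> s_notin; apply/seteqP; split => // t /= s_face.
by move: s_notin; rewrite (faces_in_S s) //; exists t.
Qed.

End Support.
End Facegram.

Theorem mainTheorem12 (R : realType) (X : finType)
    (C : R -> {set {set X}}) (S : {set {set X}}) :
  facegram C ->
  fset0 \notin S ->
  (forall sigma, faces_of C sigma -> sigma \in S) ->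
  forall U : set R,
    #|finset (fun sigma : {set X} =>
        `[< sigma != fset0 /\ life C sigma <> classical_sets.set0 /\ life C sigma = U >])| =
    #|finset (fun sigma : {set X} =>
        `[< sigma \in S /\ bar_interval (Psi C) S sigma <> classical_sets.set0 /\
            bar_interval (Psi C) S sigma = U >])|.
Proof.
move=> facegramC empty_notin_S faces_in_S U.
apply: eq_card => s; rewrite !finset.inE; congr (asbool _); apply/propext.
case: (boolP (s \in S)) => [s_S | s_notin_S].
  rewrite -(@life_bar_interval _ _ _ facegramC _ faces_in_S s).
  have s_ne0 : s != fset0 by apply: contraNneq empty_notin_S => <-.
  by split=> [[_ ?] | [_ ?]].
rewrite (@life_outside_S _ _ _ _ faces_in_S s s_notin_S).
by split=> [[_ []] | []].
Qed.
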